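(* With $D$, $K$, $\star$, $D_1=D[X]$, $\mathcal S_1^\star$ and $[\star]$ as defined in the context, for every $E\in\overline{\boldsymbol F}(D)$: (c) $(ED[X])^{[\star]}\cap K=ED_1[Y]_{\mathcal S_1^\star}\cap K=E^{\widetilde\star}$; (d) $(ED[X])^{[\star]}=E^{\widetilde\star}D[X]$.
   Context: $D$ is an integral domain with quotient field $K$, $X,Y$ indeterminates, $\star$ a semistar operation on $D$, $D_1:=D[X]$, $K_1:=K(X)$. $\overline{\boldsymbol F}(A)$ is the set of nonzero $A$-submodules of the quotient field of $A$. A semistar operation on $A$ is a map $\star:\overline{\boldsymbol F}(A)\to\overline{\boldsymbol F}(A)$ with $(xE)^\star=xE^\star$ for nonzero $x$ in the quotient field, $E\subseteq F\Rightarrow E^\star\subseteq F^\star$, $E\subseteq E^\star$, $(E^\star)^\star=E^\star$. $E^{\star_f}=\bigcup\{F^\star\mid F\subseteq E,\ F$ nonzero finitely generated fractional ideal$\}$. A nonzero ideal $I$ is a quasi-$\star$-ideal if $I^\star\cap D=I$; $\mathrm{QMax}^\star(D)$ is the set of maximal elements among proper quasi-$\star$-ideals; $E^{\widetilde\star}=\bigcap\{ED_P\mid P\in\mathrm{QMax}^{\star_f}(D)\}$. $\boldsymbol\Delta_1^\star:=\{Q_1\in\mathrm{Spec}(D_1)\mid Q_1\cap D=(0),\ \text{or } Q_1=(Q_1\cap D)[X]\text{ and }(Q_1\cap D)^{\star_f}\subsetneq D^\star\}$; $\mathcal S_1^\star:=D_1[Y]\setminus\bigcup\{Q_1[Y]\mid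 Q_1\in\boldsymbol\Delta_1^\star\}$; $[\star]$ is the semistar operation on $D_1$ given by $E^{[\star]}:=E[Y]_{\mathcal S_1^\star}\cap K_1$ (for $E\in\overline{\boldsymbol F}(D_1)$), where $E[Y]_{\mathcal S_1^\star}$ is the $D_1[Y]_{\mathcal S_1^\star}$-submodule of $K(X,Y)$ generated by $E$. *)

From HB Require Import structures.
From mathcomp Require Import all_boot all_order all_algebra.
From mathcomp Require Import fraction.
Set Implicit Arguments. Unset Strict Implicit. Unset Printing Implicit Defensive.
Import GRing.Theory.
Local Open Scope ring_scope.

Notation "x %:F" := (@FracField.tofrac _ x) : ring_scope.

Definition subs (T : Type) (A B : T -> Prop) := forall x, A x -> B x.
Definition seteq (T : Type) (A B : T -> Prop) := forall x, A x <-> B x.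

Definition gen_mod (F : fieldType) (A E : F -> Prop) : F -> Prop :=
  fun x => exists (n : nat) (e a : 'I_n -> F),
    (forall i, E (e i)) /\ (forall i, A (a i)) /\ x = \sum_(i < n) e i * a i.

Definition img (T U : Type) (f : T -> U) (E : T -> Prop) : U -> Prop :=
  fun y => exists x, E x /\ y = f x.

Definition scale_set (F : fieldType) (x : F) (E : F -> Prop) : F -> Prop :=
  fun y => exists e, E e /\ y = x * e.

Section Base.
Variable D : idomainType.

Definition KK := {fraction D}.
Definition inD (x : KK) : Prop := exists d : D, x = d%:F.

Definition is_Dmod (E : KK -> Prop) : Prop :=
  E 0 /\ (forall x y, E x -> E y -> E (x + y)) /\
  (forall (d : D) x, E x -> E (d%:F * x)).

Definition Fbar (E : KK -> Prop) : Prop := is_Dmod E /\ exists x, E x /\ x != 0.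

Definition semistar (star : (KK -> Prop) -> (KK -> Prop)) : Prop :=
  (forall E, Fbar E -> Fbar (star E)) /\
  (forall E (x : KK), Fbar E -> x != 0 -> seteq (star (scale_set x E)) (scale_set x (star E))) /\
  (forall E G, Fbar E -> Fbar G -> subs E G -> subs (star E) (star G)) /\
  (forall E, Fbar E -> subs E (star E)) /\
  (forall E, Fbar E -> seteq (star (star E)) (star E)).

Definition fg_span (l : seq KK) : KK -> Prop :=
  fun x => exists c : 'I_(size l) -> D, x = \sum_(i < size l) (c i)%:F * l`_i.

Definition nz_fg_frac (G : KK -> Prop) : Prop :=
  exists l : seq KK, seteq G (fg_span l) /\ exists x, G x /\ x != 0.

Definition star_f (star : (KK -> Prop) -> (KK -> Prop)) (E : KK -> Prop) : KK -> Prop :=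
  fun x => exists G, nz_fg_frac G /\ subs G E /\ star G x.

Definition is_ideal (I : KK -> Prop) : Prop := subs I inD /\ is_Dmod I.

Definition quasi_ideal (sf : (KK -> Prop) -> (KK -> Prop)) (I : KK -> Prop) : Prop :=
  is_ideal I /\ (exists x, I x /\ x != 0) /\
  seteq (fun x => sf I x /\ inD x) I.

Definition proper (I : KK -> Prop) : Prop := ~ I 1.

Definition QMax (star : (KK -> Prop) -> (KK -> Prop)) (P : KK -> Prop) : Prop :=
  quasi_ideal (star_f star) P /\ proper P /\
  forall Q, quasi_ideal (star_f star) Q -> proper Q -> subs P Q -> subs Q P.

Definition loc (P : KK -> Prop) : KK -> Prop :=
  fun x => exists d s : D, ~ P s%:F /\ x = d%:F / s%:F.

Definition star_tilde (star : (KK -> Prop) -> (KK -> Prop)) (E : KK -> Prop) : KK -> Prop :=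
  fun x => forall P, QMax star P -> gen_mod (loc P) E x.

Definition K1 := {fraction {poly KK}}.
Definition emb1 (c : KK) : K1 := (c%:P)%:F.
Definition inD1 (f : K1) : Prop :=
  exists p : {poly KK}, f = p%:F /\ forall i, inD p`_i.

Definition K2 := {fraction {poly K1}}.
Definition emb2 (f : K1) : K2 := (f%:P)%:F.
Definition polyY (A : K1 -> Prop) : K2 -> Prop :=
  fun z => exists q : {poly K1}, z = q%:F /\ forall i, A q`_i.

Definition is_prime1 (Q : K1 -> Prop) : Prop :=
  subs Q inD1 /\ Q 0 /\ (forall x y, Q x -> Q y -> Q (x + y)) /\
  (forall a x, inD1 a -> Q x -> Q (a * x)) /\ ~ Q 1 /\
  (forall a b, inD1 a -> inD1 b -> Q (a * b) -> Q a \/ Q b).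

Definition contr (Q : K1 -> Prop) : KK -> Prop := fun c => inD c /\ Q (emb1 c).

Definition Delta1 (star : (KK -> Prop) -> (KK -> Prop)) (Q : K1 -> Prop) : Prop :=
  is_prime1 Q /\
  ((forall c, contr Q c -> c = 0) \/
   (seteq Q (fun f => exists p : {poly KK}, f = p%:F /\ forall i, contr Q p`_i) /\
    subs (star_f star (contr Q)) (star inD) /\
    ~ seteq (star_f star (contr Q)) (star inD))).

Definition S1 (star : (KK -> Prop) -> (KK -> Prop)) : K2 -> Prop :=
  fun z => polyY inD1 z /\ forall Q, Delta1 star Q -> ~ polyY Q z.

Definition locY (star : (KK -> Prop) -> (KK -> Prop)) : K2 -> Prop :=
  fun z => exists a s, polyY inD1 a /\ S1 star s /\ z = a / s.

(* E^{[star]} = E[Y]_{S1} cap K1, for E a subset of K1 *)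
Definition bracket (star : (KK -> Prop) -> (KK -> Prop)) (E : K1 -> Prop) : K1 -> Prop :=
  fun f => gen_mod (locY star) (img emb2 E) (emb2 f).

End Base.

From HB Require Import structures.
From mathcomp Require Import all_boot all_order all_algebra.
From mathcomp Require Import fraction generic_quotient.
From mathcomp Require Import boolp classical_sets zify.
Set Implicit Arguments. Unset Strict Implicit. Unset Printing Implicit Defensive.
Import GRing.Theory.
Local Open Scope ring_scope.

(* Everything reduces to two inclusions between E^{~star} D[X] and the trace
   on K(X) of the module E D1[Y]_S (lemma bracketE identifies the latter with
   (E D[X])^{[star]}):
   - tilde_GM: for x in E^{~star}, the conductor (E :_D x) has 1 in its
     star_f-closure (it lies in no quasi-star_f-maximal ideal, and such ideals
     exist above any ideal avoiding 1 by Zorn's lemma); a finite generating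
     list l of a suitable part of it is the content of a polynomial s in S,
     and x = (sum_i (l_i x) Y^i) / s.
   - GM_tilde_poly: an element f of K(X) in E D1[Y]_S is q / s with s in S and
     q in E[X][Y]; a prime-factor argument in K[X] shows f is a polynomial,
     and for every quasi-star_f-maximal P, a content lemma over the local ring
     D_P (a Nakayama-type elimination) puts its coefficients in E D_P. *)

Lemma seteq_eq T (A B : T -> Prop) : seteq A B -> A = B.
Proof. by move=> h; apply: funext => x; apply: propext; exact: h. Qed.

Lemma least_index (P : nat -> Prop) :
  (exists i, P i) -> exists2 i, P i & forall j, (j < i)%N -> ~ P j.
Proof.
move=> [i0 Pi0]; have ex : exists i, `[< P i >] by exists i0; exact/asboolP.
case: (ex_minnP ex) => i /asboolP Pi imin; exists i => // j ji /asboolP /imin.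
by rewrite leqNgt ji.
Qed.

Lemma fracE (R : idomainType) (x : {fraction R}) :
  exists n d : R, d != 0 /\ x = n%:F / d%:F.
Proof.
have [n [d [d0 xd]]] : exists n d : R, d != 0 /\ x * d%:F = n%:F.
  elim/quotW: x => y; exists \n_y, \d_y; split; first exact: denom_ratioP.
  rewrite -[_ * _]/(FracField.mul _ _) !piE; apply/eqmodP.
  rewrite /= FracField.equivfE /FracField.mulf !numden_Ratio ?oner_eq0 ?mulf_neq0
    ?denom_ratioP ?oner_neq0 //.
  by rewrite !mulr1 mulrC.
by exists n, d; split=> //; rewrite -xd mulfK // tofrac_eq0.
Qed.

Lemma tofrac_inj (R : idomainType) (p q : R) : p%:F = q%:F -> p = q.
Proof. by move=> h; apply/eqP; rewrite -tofrac_eq h. Qed.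

Section GenMod.
Variable F : fieldType.
Implicit Types A E S : F -> Prop.

Lemma gm0 A E : gen_mod A E 0.
Proof.
exists 0%N, (fun _ => 0), (fun _ => 0); split; first by move=> [].
by split; [move=> []|rewrite big_ord0].
Qed.

Lemma gm_base A E e a : E e -> A a -> gen_mod A E (e * a).
Proof.
move=> he ha; exists 1%N, (fun _ => e), (fun _ => a); split=> //; split=> //.
by rewrite big_ord1.
Qed.

Lemma gmD A E x y : gen_mod A E x -> gen_mod A E y -> gen_mod A E (x + y).
Proof.
move=> [n [e [a [He [Ha ->]]]]] [m [e' [a' [He' [Ha' ->]]]]].
exists (n + m)%N, (fun i => match split i with inl j => e j | inr j => e' j end),
  (fun i => match split i with inl j => a j | inr j => a' j end).
split; first by move=> i; case: (split i).
split; first by move=> i; case: (split i).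
rewrite big_split_ord /=; congr (_ + _); apply: eq_bigr => i _.
  by rewrite (unsplitK (inl i)).
by rewrite (unsplitK (inr i)).
Qed.

Lemma gm_ind A E S : S 0 -> (forall x y, S x -> S y -> S (x + y)) ->
  (forall e a, E e -> A a -> S (e * a)) -> forall x, gen_mod A E x -> S x.
Proof.
move=> S0 SD Sb x [n [e [a [He [Ha ->]]]]].
by apply: (big_ind S) => // i _; apply: Sb.
Qed.

Lemma gm_mulr A E x b : (forall a, A a -> A (a * b)) ->
  gen_mod A E x -> gen_mod A E (x * b).
Proof.
move=> Ab; apply: (gm_ind (S := fun x => gen_mod A E (x * b))).
- by rewrite mul0r; apply: gm0.
- by move=> u v hu hv; rewrite mulrDl; apply: gmD.
- by move=> e a he ha; rewrite -mulrA; apply: gm_base => //; apply: Ab.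
Qed.

Lemma gm_mono A A' E E' x : subs A A' -> subs E E' ->
  gen_mod A E x -> gen_mod A' E' x.
Proof.
move=> hA hE; apply: (gm_ind (S := gen_mod A' E')); [exact: gm0|exact: gmD|].
by move=> e a he ha; apply: gm_base; auto.
Qed.

End GenMod.

Section Span.
Variable D : idomainType.
Local Notation K := (KK D).
Implicit Types (E S G : K -> Prop) (l : seq K).

Definition nz E := exists x, E x /\ x != 0.

Lemma Dmod0 S : is_Dmod S -> S 0. Proof. by case. Qed.
Lemma DmodD S x y : is_Dmod S -> S x -> S y -> S (x + y).
Proof. by case=> _ [h _]; apply: h. Qed.
Lemma DmodM S (d : D) x : is_Dmod S -> S x -> S (d%:F * x).
Proof. by case=> _ [_ h]; apply: h. Qed.
Lemma Dmod_sum S n (f : 'I_n -> K) : is_Dmod S -> (forall i, S (f i)) ->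
  S (\sum_(i < n) f i).
Proof. by move=> hS hf; apply: (big_ind S) => //; [apply: Dmod0|move=> *; apply: DmodD]. Qed.

Lemma inD0 : inD (0 : K). Proof. by exists 0; rewrite tofrac0. Qed.
Lemma inD1r : inD (1 : K). Proof. by exists 1; rewrite tofrac1. Qed.
Lemma inDD (x y : K) : inD x -> inD y -> inD (x + y).
Proof. by move=> [a ->] [b ->]; exists (a + b); rewrite tofracD. Qed.
Lemma inDM (x y : K) : inD x -> inD y -> inD (x * y).
Proof. by move=> [a ->] [b ->]; exists (a * b); rewrite tofracM. Qed.
Lemma inDN1 : inD (-1 : K). Proof. by exists (-1); rewrite tofracN tofrac1. Qed.

Lemma Fbar_inD : Fbar (@inD D).
Proof.
split; last by exists 1; split; [exact: inD1r|exact: oner_neq0].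
split; first exact: inD0.
by split=> [x y|d x hx]; [exact: inDD|apply: inDM => //; exists d].
Qed.

Lemma fg_Dmod l : is_Dmod (fg_span l).
Proof.
split; first by exists (fun _ => 0); rewrite big1 // => i _; rewrite tofrac0 mul0r.
split.
  move=> x y [c ->] [c' ->]; exists (fun i => c i + c' i).
  by rewrite -big_split; apply: eq_bigr => i _; rewrite tofracD mulrDl.
move=> d x [c ->]; exists (fun i => d * c i).
by rewrite mulr_sumr; apply: eq_bigr => i _; rewrite tofracM mulrA.
Qed.

Lemma fg_in l i : (i < size l)%N -> fg_span l l`_i.
Proof.
move=> hi; exists (fun j : 'I_(size l) => if j == Ordinal hi then 1 else 0).
rewrite (bigD1 (Ordinal hi)) //= eqxx tofrac1 mul1r big1 ?addr0 //.
by move=> j /negbTE ->; rewrite tofrac0 mul0r.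
Qed.

Lemma fg_sub l S : is_Dmod S -> (forall i, (i < size l)%N -> S l`_i) ->
  subs (fg_span l) S.
Proof. by move=> hS hl x [c ->]; apply: Dmod_sum => // i; apply: DmodM => //; exact: hl. Qed.

Lemma fg_catl l1 l2 : subs (fg_span l1) (fg_span (l1 ++ l2)).
Proof.
apply: fg_sub; first exact: fg_Dmod.
move=> i hi; have -> : l1`_i = (l1 ++ l2)`_i by rewrite nth_cat hi.
by apply: fg_in; rewrite size_cat ltn_addr.
Qed.

Lemma fg_catr l1 l2 : subs (fg_span l2) (fg_span (l1 ++ l2)).
Proof.
apply: fg_sub; first exact: fg_Dmod.
move=> i hi; have -> : l2`_i = (l1 ++ l2)`_(size l1 + i).
  by rewrite nth_cat ltnNge leq_addr /= addKn.
by apply: fg_in; rewrite size_cat ltn_add2l.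
Qed.

Lemma fg_cat_sub l1 l2 S : is_Dmod S -> subs (fg_span l1) S -> subs (fg_span l2) S ->
  subs (fg_span (l1 ++ l2)) S.
Proof.
move=> hS h1 h2; apply: fg_sub => // i; rewrite nth_cat size_cat => hi2.
case: (ltnP i (size l1)) => hi; first by apply: h1; apply: fg_in.
by apply: h2; apply: fg_in; rewrite -(ltn_add2l (size l1)) subnKC.
Qed.

Lemma fg_nz l : nz (fg_span l) -> exists2 i, (i < size l)%N & l`_i != 0.
Proof.
move=> [x [hx nx]]; apply: contrapT => h; case/negP: nx; apply/eqP.
apply: (fg_sub (S := fun y => y = 0)) hx.
  by split=> //; split=> [u v -> ->|d u ->]; rewrite ?addr0 ?mulr0.
move=> i hi; apply/eqP; apply: contrapT => /negP hn; apply: h; by exists i.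
Qed.

Lemma fg_scale l (b : K) : scale_set b (fg_span l) = fg_span [seq b * x | x <- l].
Proof.
have hspan := fg_Dmod [seq b * x | x <- l].
apply: seteq_eq => y; split.
  move=> [e [he ->]].
  apply: (fg_sub (S := fun x => fg_span [seq b * x | x <- l] (b * x))) he.
    split; first by rewrite mulr0; apply: Dmod0.
    split=> [u v hu hv|d u hu]; first by rewrite mulrDr; apply: DmodD.
    by rewrite mulrCA; apply: DmodM.
  move=> i hi; rewrite -(nth_map 0 0 (fun x => b * x)) //.
  by apply: fg_in; rewrite size_map.
move=> hy; apply: (fg_sub (S := scale_set b (fg_span l))) hy.
  split; first by exists 0; split; [apply: Dmod0; apply: fg_Dmod|rewrite mulr0].
  split=> [u v [e [he ->]] [e' [he' ->]]|d u [e [he ->]]].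
    by exists (e + e'); split; [apply: DmodD=> //; apply: fg_Dmod|rewrite mulrDr].
  by exists (d%:F * e); split; [apply: DmodM=> //; apply: fg_Dmod|rewrite mulrCA].
move=> i; rewrite size_map => hi; rewrite (nth_map 0) //.
by exists l`_i; split=> //; apply: fg_in.
Qed.

Lemma fg1 (e : K) : fg_span [:: e] e.
Proof. exact: (@fg_in [:: e] 0%N). Qed.

Lemma fg1_sub E (e : K) : is_Dmod E -> E e -> subs (fg_span [:: e]) E.
Proof. by move=> hE he; apply: fg_sub => // -[]. Qed.

End Span.

Section StarF.
Variable D : idomainType.
Local Notation K := (KK D).
Variable star : (K -> Prop) -> (K -> Prop).
Hypothesis Hs : semistar star.
Implicit Types (E J S G : K -> Prop) (l : seq K).

Lemma star_Fbar E : Fbar E -> Fbar (star E). Proof. by move: Hs => [h _]; apply: h. Qed.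
Lemma star_scale E x : Fbar E -> x != 0 -> star (scale_set x E) = scale_set x (star E).
Proof. by move: Hs => [] _ [h _] hE hx; apply: seteq_eq; apply: h. Qed.
Lemma star_mono E G : Fbar E -> Fbar G -> subs E G -> subs (star E) (star G).
Proof. by move: Hs => [] _ [_ [h _]]; apply: h. Qed.
Lemma star_ext E : Fbar E -> subs E (star E).
Proof. by move: Hs => [] _ [_ [_ [h _]]]; apply: h. Qed.
Lemma star_idem E : Fbar E -> subs (star (star E)) (star E).
Proof. by move: Hs => [] _ [_ [_ [_ h]]] hE x /(h E hE x). Qed.
Lemma star_Dmod E : Fbar E -> is_Dmod (star E).
Proof. by move/star_Fbar; case. Qed.

Lemma fg_Fbar l : nz (fg_span l) -> Fbar (fg_span l).
Proof. by move=> h; split=> //; apply: fg_Dmod. Qed.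

Lemma star_fE E x : star_f star E x <->
  exists l, nz (fg_span l) /\ subs (fg_span l) E /\ star (fg_span l) x.
Proof.
split=> [[G [[l [hl hnz]] [hGE hx]]]|[l [h1 [h2 h3]]]].
  by rewrite (seteq_eq hl) in hnz hGE hx; exists l.
by exists (fg_span l); split=> //; exists l.
Qed.

Lemma sf_ext E : is_Dmod E -> nz E -> subs E (star_f star E).
Proof.
move=> hE [e [he ne]] x hx; apply/star_fE.
have [->|nx] := eqVneq x 0.
  have nze : nz (fg_span [:: e]) by exists e; split=> //; apply: fg1.
  exists [:: e]; split=> //; split; first exact: fg1_sub.
  by apply: Dmod0; apply: star_Dmod; apply: fg_Fbar.
have nzx : nz (fg_span [:: x]) by exists x; split=> //; apply: fg1.
exists [:: x]; split=> //; split; first exact: fg1_sub.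
by apply: star_ext; [apply: fg_Fbar|apply: fg1].
Qed.

Lemma sf_mono E E' : subs E E' -> subs (star_f star E) (star_f star E').
Proof.
move=> h x /star_fE [l [h1 [h2 h3]]]; apply/star_fE; exists l; split=> //; split=> //.
by move=> y /h2 /h.
Qed.

Lemma sf_combine E l : is_Dmod E -> nz (star_f star E) ->
  (forall i, (i < size l)%N -> star_f star E l`_i) ->
  exists l', nz (fg_span l') /\ subs (fg_span l') E /\
    forall i, (i < size l)%N -> star (fg_span l') l`_i.
Proof.
move=> hE; elim: l => [|a l IH] hnz hl.
  by case: hnz => y [/star_fE [l' [h1 [h2 h3]]] _]; exists l'.
case: (IH hnz (fun i hi => hl i.+1 hi)) => l' [n' [s' h']].
case/star_fE: (hl 0%N isT) => la [na [sa ha]].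
have nza : nz (fg_span (la ++ l')).
  by case: na => y [hy ny]; exists y; split=> //; apply: fg_catl.
exists (la ++ l'); split=> //; split; first exact: fg_cat_sub.
case=> [_|i hi] /=; first exact: (star_mono (fg_Fbar na) (fg_Fbar nza) (@fg_catl _ la l')).
by apply: (star_mono (fg_Fbar n') (fg_Fbar nza) (@fg_catr _ la l')); apply: h'.
Qed.

Lemma sf_idem E : is_Dmod E -> subs (star_f star (star_f star E)) (star_f star E).
Proof.
move=> hE x /star_fE [l [nl [sl hx]]].
have hnz : nz (star_f star E) by case: nl => y [hy ny]; exists y; split=> //; apply: sl.
case: (sf_combine hE hnz (fun i hi => sl _ (fg_in hi))) => l' [n' [s' h']].
apply/star_fE; exists l'; split=> //; split=> //.
have F' := fg_Fbar n'.
apply: (star_idem F'); apply: (star_mono (fg_Fbar nl) (star_Fbar F')) hx.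
by apply: fg_sub => //; apply: star_Dmod.
Qed.

Lemma sf_Dmod E : is_Dmod E -> nz E -> is_Dmod (star_f star E).
Proof.
move=> hE hnz; split; first by apply: (sf_ext hE hnz); apply: Dmod0.
split=> [x y /star_fE [l1 [n1 [s1 h1]]] /star_fE [l2 [n2 [s2 h2]]]|d x].
  have n12 : nz (fg_span (l1 ++ l2)).
    by case: n1 => z [hz nzz]; exists z; split=> //; apply: fg_catl.
  apply/star_fE; exists (l1 ++ l2); split=> //; split; first exact: fg_cat_sub.
  apply: DmodD; first by apply: star_Dmod; apply: fg_Fbar.
    exact: (star_mono (fg_Fbar n1) (fg_Fbar n12) (@fg_catl _ l1 l2)).
  exact: (star_mono (fg_Fbar n2) (fg_Fbar n12) (@fg_catr _ l1 l2)).
move=> /star_fE [l [n [s h]]]; apply/star_fE; exists l; split=> //; split=> //.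
by apply: DmodM => //; apply: star_Dmod; apply: fg_Fbar.
Qed.

Lemma sf_sub_star_D E : subs E (@inD D) -> subs (star_f star E) (star (@inD D)).
Proof.
move=> h x /star_fE [l [n [s hx]]]; apply: (star_mono (fg_Fbar n) (Fbar_inD D)) hx.
by move=> y /s /h.
Qed.

Lemma sf_one J : star_f star J 1 -> subs (star (@inD D)) (star_f star J).
Proof.
move=> /star_fE [l [n [s h1]]] x hx; apply/star_fE; exists l; split=> //; split=> //.
have F' := fg_Fbar n.
apply: (star_idem F'); apply: (star_mono (Fbar_inD D) (star_Fbar F')) hx.
by move=> y [d ->]; rewrite -[d%:F]mulr1; apply: DmodM => //; apply: star_Dmod.
Qed.

Lemma sf_one_scale J I (b : K) : is_Dmod I -> b != 0 -> subs (scale_set b J) I ->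
  star_f star J 1 -> star_f star I b.
Proof.
move=> hI b0 hbJ /star_fE [l [nl [sl h1]]].
have nzb : nz (fg_span [seq b * x | x <- l]).
  case: nl => z [hz nz0]; exists (b * z); split; last by rewrite mulf_neq0.
  by rewrite -fg_scale; exists z.
apply/star_fE; exists [seq b * x | x <- l]; split=> //; split.
  by rewrite -fg_scale => y [x [/sl hx ->]]; apply: hbJ; exists x.
rewrite -fg_scale star_scale //; last exact: fg_Fbar.
by exists 1; split=> //; rewrite mulr1.
Qed.

Definition qclosure J : K -> Prop := fun x => star_f star J x /\ inD x.

Lemma qclosure_sub J : is_ideal J -> nz J -> subs J (qclosure J).
Proof. by move=> [hJD hJ] hnz x hx; split; [apply: sf_ext|apply: hJD]. Qed.

Lemma qclosure_quasi J : is_Dmod J -> nz J -> quasi_ideal (star_f star) (qclosure J).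
Proof.
move=> hJ hnz.
have hDm := sf_Dmod hJ hnz; have [hD0 [hDD hDM]] := (Fbar_inD D).1.
have qD : is_Dmod (qclosure J).
  split; first by split; [apply: Dmod0|].
  split=> [x y [hx1 hx2] [hy1 hy2]|d x [hx1 hx2]]; first by split; [apply: DmodD|apply: hDD].
  by split; [apply: DmodM|apply: hDM].
have nzq : nz (qclosure J).
  have [x [hx nx]] := hnz.
  case: (fracE x) => n [d [d0 ex]]; rewrite {}ex in hx nx.
  exists n%:F; split; last by apply: contraNneq nx => ->; rewrite mul0r.
  split; last by exists n.
  have -> : n%:F = d%:F * (n%:F / d%:F) by rewrite mulrC divfK // tofrac_eq0.
  by apply: (DmodM _ hDm); apply: sf_ext.
split; first by split; [move=> x []|].
split=> // x; split=> [[hx1 hx2]|hx]; last by split; [apply: sf_ext|case: hx].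
split=> //; apply: (sf_idem hJ); apply: (sf_mono _ hx1); by move=> y [].
Qed.

End StarF.

Definition adjoin (D : idomainType) (P : KK D -> Prop) (a : D) : KK D -> Prop :=
  fun x => exists p (d : D), P p /\ x = p + a%:F * d%:F.

Lemma adjoin_Dmod (D : idomainType) (P : KK D -> Prop) a :
  is_Dmod P -> is_Dmod (adjoin P a).
Proof.
move=> hP; split; first by exists 0, 0; split; [exact: Dmod0|rewrite tofrac0 mulr0 addr0].
split=> [x y [p [d [hp ->]]] [p' [d' [hp' ->]]]|d' x [p [d [hp ->]]]].
  exists (p + p'), (d + d'); split; first exact: DmodD.
  by rewrite tofracD mulrDr addrACA.
exists (d'%:F * p), (d' * d); split; first exact: DmodM.
by rewrite mulrDr tofracM mulrCA.
Qed.

Section QuasiMaximal.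
Variable D : idomainType.
Local Notation K := (KK D).
Variable star : (K -> Prop) -> (K -> Prop).
Hypothesis Hs : semistar star.
Local Notation sf := (star_f star).

Section OneQMax.
Variable P : K -> Prop.
Hypothesis HP : QMax star P.

Lemma qm_ideal : is_ideal P. Proof. by case: HP => [[h _] _]. Qed.
Lemma qm_Dmod : is_Dmod P. Proof. exact: qm_ideal.2. Qed.
Lemma qm_inD : subs P (@inD D). Proof. exact: qm_ideal.1. Qed.
Lemma qm_quasi x : sf P x -> inD x -> P x.
Proof. by case: HP => [[_ [_ h]] _] h1 h2; apply/h. Qed.
Lemma qm_proper : ~ P 1. Proof. by case: HP => _ [h _]. Qed.
Lemma qm_max Q : quasi_ideal sf Q -> ~ Q 1 -> subs P Q -> subs Q P.
Proof. by case: HP => _ [_ h]; apply: h. Qed.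

Lemma qm_adjoin_one (a : D) : ~ P a%:F -> sf (adjoin P a) 1.
Proof.
move=> na.
have hA := adjoin_Dmod a qm_Dmod.
have aA : adjoin P a a%:F.
  by exists 0, 1; split; [exact: Dmod0 qm_Dmod|rewrite tofrac1 mulr1 add0r].
have nzA : nz (adjoin P a).
  by exists a%:F; split=> //; apply: contra_not_neq na => ->; exact: Dmod0 qm_Dmod.
have AD : subs (adjoin P a) (@inD D).
  by move=> x [p [d [hp ->]]]; apply: inDD; [apply: qm_inD|apply: inDM; [exists a|exists d]].
have PA : subs P (qclosure star (adjoin P a)).
  move=> p hp; apply: (qclosure_sub Hs) => //.
  by exists p, 0; split=> //; rewrite tofrac0 mulr0 addr0.
apply: contrapT => n1; apply: na.
apply: (qm_max (qclosure_quasi Hs hA nzA) _ PA); first by case.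
exact: (qclosure_sub Hs).
Qed.

Lemma qm_prime (a b : D) : P (a * b)%:F -> P a%:F \/ P b%:F.
Proof.
move=> hab; apply: contrapT => /not_orP [na nb]; apply: (nb).
have b0 : b%:F != 0 by apply: contra_not_neq nb => ->; exact: Dmod0 qm_Dmod.
apply: qm_quasi; last by exists b.
apply: (sf_one_scale Hs qm_Dmod b0 _ (qm_adjoin_one na)).
move=> y [x [[p [d [hp ->]]] ->]].
have -> : b%:F * (p + a%:F * d%:F) = b%:F * p + d%:F * (a * b)%:F.
  by rewrite mulrDr tofracM [d%:F * _]mulrC mulrCA mulrA.
by apply: (DmodD qm_Dmod); apply: (DmodM _ qm_Dmod).
Qed.

End OneQMax.

Section Existence.
Variable I : K -> Prop.
Hypotheses (hI : is_ideal I) (hnz : nz I) (hn1 : ~ sf I 1).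

Definition above (J : K -> Prop) := is_ideal J /\ subs I J /\ ~ sf J 1.

Section Chain.
Variable C : set (set K).
Hypotheses (hC : forall A, C A -> A = set0 \/ above A)
  (hch : total_on C subset).
Variable A0 : set K.
Hypotheses (hA0 : C A0) (fA0 : above A0).

Local Notation U := (\bigcup_(X in C) X)%classic.

Lemma chain_above A x : C A -> A x -> above A.
Proof. by move=> hA hx; case: (hC hA) => // eA; rewrite eA in hx. Qed.

Lemma chain_bound l : (forall i, (i < size l)%N -> U l`_i) ->
  exists A, [/\ C A, above A & forall i, (i < size l)%N -> A l`_i].
Proof.
elim: l => [|a l IH] hl; first by exists A0.
case: (IH (fun i hi => hl i.+1 hi)) => A [hA fA hlA].
case: (hl 0%N isT) => B hB /= ha.
case: (hch hA hB) => sAB.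
  by exists B; split; [|exact: chain_above ha|case=> [|i] hi //=; apply: sAB; apply: hlA].
by exists A; split=> //; case=> [|i] hi //=; [apply: sAB|apply: hlA].
Qed.

Lemma chain_union_above : above U.
Proof.
have UD : is_Dmod U.
  split; first by exists A0 => //; apply: Dmod0 fA0.1.2.
  split=> [x y [A hA hx] [B hB hy]|d x [A hA hx]].
    case: (hch hA hB) => h.
      by exists B => //; apply: DmodD (chain_above hB hy).1.2 _ _ => //; apply: h.
    by exists A => //; apply: DmodD (chain_above hA hx).1.2 _ _ => //; apply: h.
  by exists A => //; apply: DmodM (chain_above hA hx).1.2 _.
split; first by split=> // x [A hA hx]; apply: (chain_above hA hx).1.1.
split; first by move=> x hx; exists A0 => //; apply: fA0.2.1.
move=> /star_fE [l [nl [sl h1]]].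
case: (chain_bound (fun i hi => sl _ (fg_in hi))) => A [hA [[_ hAD] [_ hn]] hlA].
by apply: hn; apply/star_fE; exists l; split=> //; split=> //; exact: fg_sub.
Qed.

End Chain.

Lemma maximal_above_QMax M : above M ->
  (forall N, above N -> subs M N -> subs N M) -> QMax star M.
Proof.
move=> [[hMD hMmod] [sIM n1]] hmax.
have nzM : nz M by case: hnz => x [hx nx]; exists x; split=> //; apply: sIM.
have qM := qclosure_quasi Hs hMmod nzM.
have sMq := qclosure_sub Hs (conj hMD hMmod) nzM.
have aq : above (qclosure star M).
  split; first exact: qM.1.
  split; first by move=> x /sIM /sMq.
  by move=> h; apply: n1; apply: (sf_idem Hs hMmod); apply: (sf_mono _ h) => x [].
have eM : seteq (qclosure star M) M by move=> x; split; [exact: hmax _ aq sMq x|exact: sMq].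
split; first by rewrite -(seteq_eq eM).
split; first by move=> hM1; apply: n1; apply: (sf_ext Hs hMmod nzM).
move=> Q [hQ [nzQ qQ]] pQ sMQ; apply: hmax => //; split=> //.
split; first by move=> x /sIM /sMQ.
by move=> h1; apply: pQ; apply/qQ; split=> //; exact: inD1r.
Qed.

Lemma qm_exists : exists2 P, QMax star P & subs I P.
Proof.
have aI : above I by split; [|split=> // x].
have [M [hM Mmax]] : exists M : set K, (M = set0 \/ above M) /\
    forall B, (M `<` B)%classic -> ~ (B = set0 \/ above B).
  apply: Zorn_bigcup => C hC hch.
  have [[A0 hA0 fA0]|nA] := pselect (exists2 A, C A & above A).
    by right; apply: (chain_union_above hC hch hA0 fA0).
  left; apply: seteq_eq => x; split=> // -[A hA hx].
  by case: nA; exists A => //; apply: (chain_above hC hA hx).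
have nmax N : above N -> subs M N -> subs N M.
  move=> hN sMN; apply: contrapT => nNM; apply: (Mmax N); by [split|right].
case: hM => [eM|hM]; last by exists M => //; [apply: maximal_above_QMax|case: hM => _ []].
case: hnz => x [hx _]; case: (Mmax I); last by right.
by rewrite eM; split=> [y []|/(_ x hx)].
Qed.

End Existence.

End QuasiMaximal.

Lemma coefM_split (R : nzRingType) (p q : {poly R}) i j :
  (p * q)`_(i + j) =
  p`_i * q`_j + \sum_(k < (i + j).+1 | val k != i) p`_k * q`_(i + j - k).
Proof.
have hi : (i < (i + j).+1)%N by rewrite ltnS leq_addr.
by rewrite coefM (bigD1 (Ordinal hi)) //= addKn.
Qed.

(* A Nakayama-type elimination. *)
Section Elimination.
Variable F : fieldType.
Variables (R m M : F -> Prop).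
Hypotheses (M0 : M 0) (MD : forall x y, M x -> M y -> M (x + y))
  (MR : forall r x, R r -> M x -> M (r * x)) (mR : subs m R) (m0 : m 0)
  (mD : forall x y, m x -> m y -> m (x + y)) (mRm : forall r x, R r -> m x -> m (r * x))
  (munit : forall c, m c -> exists2 v, R v & v * (1 - c) = 1).

Definition lin_comb N (a : nat -> F) (x : F) :=
  exists b (c : nat -> F), [/\ M b, forall i, m (c i) & x = b + \sum_(i < N) c i * a i].

Section LinComb.
Variables (N : nat) (a : nat -> F).
Local Notation V := (lin_comb N a).

Lemma lc_M x : M x -> V x.
Proof.
move=> hx; exists x, (fun _ => 0); split=> //.
by rewrite big1 ?addr0 // => i _; rewrite mul0r.
Qed.

Lemma lc_add x y : V x -> V y -> V (x + y).
Proof.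
move=> [b [c [hb hc ->]]] [b' [c' [hb' hc' ->]]].
exists (b + b'), (fun i => c i + c' i); split; [exact: MD|by move=> i; apply: mD|].
by rewrite addrACA -big_split /=; congr (_ + _); apply: eq_bigr => i _; rewrite mulrDl.
Qed.

Lemma lc_R r x : R r -> V x -> V (r * x).
Proof.
move=> hr [b [c [hb hc ->]]].
exists (r * b), (fun i => r * c i); split; [exact: MR|by move=> i; apply: mRm|].
by rewrite mulrDr mulr_sumr; congr (_ + _); apply: eq_bigr => i _; rewrite mulrA.
Qed.

Lemma lc_gen d i : m d -> (i < N)%N -> V (d * a i).
Proof.
move=> hd hi; exists 0, (fun k => if k == i then d else 0).
split=> //; first by move=> k; case: eqP.
rewrite add0r (bigD1 (Ordinal hi)) //= eqxx big1 ?addr0 //.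
by move=> k /negbTE; rewrite -(inj_eq val_inj) /= => ->; rewrite mul0r.
Qed.

Lemma lc_in_M x : (forall i, (i < N)%N -> M (a i)) -> V x -> M x.
Proof.
move=> ha [b [c [hb hc ->]]]; apply: MD => //.
by apply: (big_ind M) => // i _; apply: MR; [apply: mR|apply: ha].
Qed.

End LinComb.

Lemma eliminate N (a : nat -> F) : (forall j, (j < N)%N -> lin_comb N a (a j)) ->
  forall j, (j < N)%N -> M (a j).
Proof.
elim: N => [//|N IH] hN.
have [b [c [hb hc eN]]] := hN N (ltnSn N).
rewrite big_ord_recr /= in eN.
pose y := b + \sum_(i < N) c i * a i.
have yN : lin_comb N a y by exists b, c.
have [v hv hv1] := munit (hc N).
have eaN : a N = v * y.
  rewrite -[a N]mul1r -hv1 -mulrA; congr (_ * _).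
  by rewrite mulrBl mul1r {1}eN addrA addrK.
have lower j : (j < N)%N -> lin_comb N a (a j).
  move=> hj; have [bj [cj [hbj hcj ej]]] := hN j (ltnW hj).
  rewrite ej big_ord_recr /= addrA; apply: lc_add; first by exists bj, cj.
  by rewrite eaN; apply: lc_R; [apply: mR|apply: lc_R].
have hlow := IH lower.
move=> j; rewrite ltnS leq_eqVlt => /orP [/eqP ->|]; last exact: hlow.
by rewrite eaN; apply: MR => //; exact: lc_in_M hlow yN.
Qed.

End Elimination.

Section Localization.
Variable D : idomainType.
Local Notation K := (KK D).
Variable P : K -> Prop.
Hypotheses (PD : is_Dmod P) (Pprime : forall a b : D, P (a * b)%:F -> P a%:F \/ P b%:F)
  (P1 : ~ P 1).

Definition locmax (x : K) := exists d s : D, [/\ P d%:F, ~ P s%:F & x = d%:F / s%:F].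

Lemma notP_neq0 (s : D) : ~ P s%:F -> s%:F != 0.
Proof. by apply: contra_not_neq => ->; apply: Dmod0. Qed.
Lemma notPM (s s' : D) : ~ P s%:F -> ~ P s'%:F -> ~ P (s * s')%:F.
Proof. by move=> h1 h2 /Pprime []. Qed.

Lemma locM x y : loc P x -> loc P y -> loc P (x * y).
Proof.
move=> [d [s [hs ->]]] [d' [s' [hs' ->]]]; exists (d * d'), (s * s').
by split; [exact: notPM|rewrite mulf_div !tofracM].
Qed.
Lemma loc_inD x : inD x -> loc P x.
Proof. by move=> [d ->]; exists d, 1; split; rewrite tofrac1 ?divr1. Qed.
Lemma loc_inv (s : D) : ~ P s%:F -> loc P (s%:F)^-1.
Proof. by move=> h; exists 1, s; split=> //; rewrite tofrac1 div1r. Qed.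

Lemma locmax_loc : subs locmax (loc P).
Proof. by move=> x [d [s [_ hs ->]]]; exists d, s. Qed.
Lemma locmax_P (d : D) : P d%:F -> locmax d%:F.
Proof. by move=> h; exists d, 1; rewrite tofrac1 divr1. Qed.
Lemma locmax0 : locmax 0.
Proof. by rewrite -tofrac0; apply: locmax_P; rewrite tofrac0; apply: Dmod0. Qed.
Lemma locmaxD x y : locmax x -> locmax y -> locmax (x + y).
Proof.
move=> [d [s [hd hs ->]]] [d' [s' [hd' hs' ->]]]; exists (d * s' + d' * s), (s * s').
split; last by rewrite addf_div ?notP_neq0 // tofracD !tofracM.
  by rewrite tofracD !tofracM; apply: (DmodD PD); rewrite mulrC; apply: (DmodM _ PD).
exact: notPM.
Qed.
Lemma locmaxR r x : loc P r -> locmax x -> locmax (r * x).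
Proof.
move=> [d [s [hs ->]]] [d' [s' [hd' hs' ->]]]; exists (d * d'), (s * s').
split; [by rewrite tofracM; apply: DmodM|exact: notPM|by rewrite mulf_div !tofracM].
Qed.

Lemma locmax_unit c : locmax c -> exists2 v, loc P v & v * (1 - c) = 1.
Proof.
move=> [d [s [hd hs ->]]].
have hsd : ~ P (s - d)%:F.
  by move=> h; apply: hs; rewrite -(subrK d s) tofracD; apply: DmodD.
exists (s%:F / (s - d)%:F); first by exists s, (s - d).
have s0 := notP_neq0 hs; have sd0 := notP_neq0 hsd.
have -> : 1 - d%:F / s%:F = (s - d)%:F / s%:F by rewrite tofracB mulrBl divff.
by rewrite mulf_div [X in _ / X]mulrC divff // mulf_neq0.
Qed.

Section Module.
Variable E : K -> Prop.
Hypothesis hE : is_Dmod E.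
Local Notation M := (gen_mod (loc P) E).

Lemma M_R r x : loc P r -> M x -> M (r * x).
Proof. by move=> hr hx; rewrite mulrC; apply: gm_mulr hx => a ha; apply: locM. Qed.
Lemma M_E e : E e -> M e.
Proof.
by move=> he; rewrite -[e]mulr1; apply: gm_base => //; apply: loc_inD; exact: inD1r.
Qed.

Lemma loc_denom x : M x -> exists2 s : D, ~ P s%:F & E (s%:F * x).
Proof.
apply: (gm_ind (S := fun x => exists2 s : D, ~ P s%:F & E (s%:F * x))).
- by exists 1; [rewrite tofrac1|rewrite mulr0; apply: Dmod0].
- move=> u v [s hs hu] [s' hs' hv]; exists (s * s'); first exact: notPM.
  rewrite tofracM mulrDr; apply: DmodD => //.
    by rewrite -mulrA mulrCA; apply: DmodM.
  by rewrite -mulrA; apply: DmodM.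
- move=> e a he [d [s [hs ->]]]; exists s => //.
  by rewrite [e * _]mulrC mulrA mulrCA divff ?notP_neq0 // mulr1; apply: DmodM.
Qed.

(* With k the least index such that h_k is outside P, the coefficient of
   X^(j+k) in p h expresses p_j, up to the unit h_k of D_P, as an element of
   M plus a P D_P-combination of the other coefficients of p; the elimination
   lemma concludes. *)
Section Content.
Variables (p h : {poly K}) (k : nat).
Hypotheses (hD : forall i, inD h`_i) (hk : ~ P h`_k)
  (hlt : forall i, (i < k)%N -> P h`_i) (hph : forall i, E (p * h)`_i).
Local Notation V := (lin_comb locmax M (size p) (fun i => p`_i)).

Let V_M x : M x -> V x. Proof. exact: (lc_M locmax0). Qed.
Let V_add x y : V x -> V y -> V (x + y).
Proof. exact: (lc_add (@gmD _ _ _) locmaxD). Qed.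
Let V_R r x : loc P r -> V x -> V (r * x).
Proof. exact: (lc_R M_R locmaxR). Qed.
Let V_gen d i : locmax d -> V (d * p`_i).
Proof.
move=> hd; case: (ltnP i (size p)) => hi.
  exact: (lc_gen (gm0 _ _) locmax0 (fun i => p`_i) hd hi).
by rewrite nth_default // mulr0; apply: V_M; exact: gm0.
Qed.

Lemma content_lc j : V p`_j.
Proof.
elim/ltn_ind: j => j IH.
(* terms p_i h_(j+k-i) with i < j: induction; with i > j: h_(j+k-i) is in P *)
have hrest : V (\sum_(i < (j + k).+1 | val i != j) p`_i * h`_(j + k - i)).
  apply: (big_ind V); [by apply: V_M; exact: gm0|exact: V_add|].
  move=> i; rewrite mulrC; case: (ltngtP i j) => // hij _.
    by apply: V_R; [apply: loc_inD|apply: IH].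
  have lt_k : (j + k - i < k)%N by have := ltn_ord i; lia.
  case: (hD (j + k - i)%N) => d hd; rewrite hd; apply: V_gen; apply: locmax_P.
  by rewrite -hd; apply: hlt.
have hjk : V (p`_j * h`_k).
  have := hph (j + k)%N; rewrite coefM_split => /M_E /V_M.
  move=> /V_add /(_ (V_R (loc_inD (inDN1 D)) hrest)).
  by rewrite mulN1r addrK.
case: (hD k) => dk hdk.
have hk0 : h`_k != 0 by rewrite hdk; apply: notP_neq0; rewrite -hdk.
rewrite -[p`_j](mulfK hk0) mulrC; apply: V_R => //.
by rewrite hdk; apply: loc_inv; rewrite -hdk.
Qed.

Lemma content_coef j : M p`_j.
Proof.
case: (ltnP j (size p)) => hj; last by rewrite nth_default //; exact: gm0.
apply: (eliminate (gm0 _ _) (@gmD _ _ _) M_R locmax_loc locmaxD locmaxR locmax_unit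
  (N := size p) (a := fun i => p`_i)) => // i _; exact: content_lc.
Qed.

End Content.

Lemma content (p h : {poly K}) : (forall i, inD h`_i) -> (exists k, ~ P h`_k) ->
  (forall i, E (p * h)`_i) -> forall j, M p`_j.
Proof.
move=> hD hk hph; have [k hk' hmin] := least_index hk.
by apply: (content_coef hD hk') => // i /hmin /contrapT.
Qed.

End Module.
End Localization.

Section Gauss.
Variable F : fieldType.
Variables (A Q : F -> Prop).
Hypotheses (Q0 : Q 0) (QD : forall x y, Q x -> Q y -> Q (x + y))
  (QA : forall a x, A a -> Q x -> Q (a * x)) (AN1 : A (-1))
  (Qpr : forall a b, A a -> A b -> Q (a * b) -> Q a \/ Q b).

Lemma gauss_prime (p q : {poly F}) : (forall i, A p`_i) -> (forall i, A q`_i) ->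
  (forall i, Q (p * q)`_i) -> (forall i, Q p`_i) \/ (forall i, Q q`_i).
Proof.
move=> hp hq hpq; apply: contrapT => /not_orP [/existsNP np /existsNP nq].
have [i0 hi0 hmi] := least_index np; have [j0 hj0 hmj] := least_index nq.
have hrest : Q (\sum_(k < (i0 + j0).+1 | val k != i0) p`_k * q`_(i0 + j0 - k)).
  apply: (big_ind Q) => // k; case: (ltngtP k i0) => // hk _.
    by rewrite mulrC; apply: QA => //; apply: contrapT; apply: hmi.
  apply: QA => //; apply: contrapT; apply: hmj; have := ltn_ord k; lia.
have : Q (p`_i0 * q`_j0).
  have := QD (hpq (i0 + j0)%N) (QA AN1 hrest).
  by rewrite coefM_split mulN1r addrK.
by case/Qpr.
Qed.

End Gauss.

Section FieldPoly.
Variable F : fieldType.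

Lemma prime_factor (v : {poly F}) : (1 < size v)%N -> exists pi : {poly F},
  [/\ (1 < size pi)%N, pi %| v & forall a b, pi %| a * b -> pi %| a \/ pi %| b].
Proof.
move=> hv.
have [n [pi [hpi dpi spi]] hmin] := least_index
  (ex_intro (fun n => exists pi : {poly F}, [/\ (1 < size pi)%N, pi %| v & size pi = n])
    _ (ex_intro _ v (And3 hv (dvdpp v) erefl))).
exists pi; split=> // a b hab.
have pi0 : pi != 0 by rewrite -size_poly_eq0 -lt0n (ltn_trans _ hpi).
case: (ltnP 1 (size (gcdp pi a))) => hg.
  (* by minimality the divisor gcd(pi, a) of v is associate to pi *)
  have hle : (size pi <= size (gcdp pi a))%N.
    rewrite leqNgt spi; apply/negP => /hmin; apply; exists (gcdp pi a); split=> //.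
    exact: dvdp_trans (dvdp_gcdl pi a) dpi.
  have : size (gcdp pi a) == size pi by rewrite eqn_leq hle dvdp_leq ?dvdp_gcdl.
  rewrite dvdp_size_eqp ?dvdp_gcdl // => heq.
  by left; rewrite -(eqp_dvdl _ heq); exact: dvdp_gcdr.
have hcop : coprimep pi a.
  by rewrite coprimep_def eqn_leq hg /= lt0n size_poly_eq0 gcdp_eq0 negb_and pi0.
by right; rewrite -(Gauss_dvdpr _ hcop).
Qed.

Lemma frac_coprime (f : {fraction {poly F}}) :
  exists u v : {poly F}, [/\ v != 0, coprimep u v & f = u%:F / v%:F].
Proof.
case: (fracE f) => u [v [v0 ->]].
set g := gcdp u v; set u' := u %/ g; set v' := v %/ g.
have g0 : g != 0 by rewrite gcdp_eq0 negb_and v0 orbT.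
have eu : u = u' * g by rewrite divpK // dvdp_gcdl.
have ev : v = v' * g by rewrite divpK // dvdp_gcdr.
exists u', v'; split.
- by apply: contraNneq v0 => e; rewrite ev e mul0r.
- by apply: coprimep_div_gcd; rewrite v0 orbT.
- by rewrite [in LHS]eu [in LHS]ev !tofracM invfM mulrACA divff ?mulr1 // tofrac_eq0.
Qed.

End FieldPoly.

Section CoefSubring.
Variable F : fieldType.
Variable A : F -> Prop.
Hypotheses (A0 : A 0) (AD : forall x y, A x -> A y -> A (x + y))
  (AM : forall x y, A x -> A y -> A (x * y)).

Lemma coefA_add (p q : {poly F}) : (forall i, A p`_i) -> (forall i, A q`_i) ->
  forall i, A (p + q)`_i.
Proof. by move=> hp hq i; rewrite coefD; apply: AD. Qed.
Lemma coefA_mul (p q : {poly F}) : (forall i, A p`_i) -> (forall i, A q`_i) ->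
  forall i, A (p * q)`_i.
Proof. by move=> hp hq i; rewrite coefM; apply: (big_ind A) => // j _; apply: AM. Qed.
Lemma coefA_C c : A c -> forall i, A c%:P`_i.
Proof. by move=> hc i; rewrite coefC; case: eqP. Qed.

End CoefSubring.

Section PolyRings.
Variable D : idomainType.
Local Notation K := (KK D).
Local Notation K1 := (K1 D).

Lemma emb1D : {morph (@emb1 D) : x y / x + y}.
Proof. by move=> x y; rewrite /emb1 polyCD tofracD. Qed.
Lemma emb1M : {morph (@emb1 D) : x y / x * y}.
Proof. by move=> x y; rewrite /emb1 polyCM tofracM. Qed.
Lemma emb10 : emb1 (0 : K) = 0. Proof. by rewrite /emb1 tofrac0. Qed.
Lemma emb2D : {morph (@emb2 D) : x y / x + y}.
Proof. by move=> x y; rewrite /emb2 polyCD tofracD. Qed.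
Lemma emb2M : {morph (@emb2 D) : x y / x * y}.
Proof. by move=> x y; rewrite /emb2 polyCM tofracM. Qed.
Lemma emb20 : emb2 (0 : K1) = 0. Proof. by rewrite /emb2 tofrac0. Qed.

Lemma inD1_0 : inD1 (0 : K1).
Proof. by exists 0; rewrite tofrac0; split=> // i; rewrite coef0; exact: inD0. Qed.
Lemma inD1_emb1 (c : K) : inD c -> inD1 (emb1 c).
Proof. by move=> h; exists c%:P; split=> //; apply: coefA_C => //; exact: inD0. Qed.
Lemma inD1_1 : inD1 (1 : K1).
Proof. by rewrite -[1](@tofrac1 _); apply: inD1_emb1; exact: inD1r. Qed.
Lemma inD1_N1 : inD1 (-1 : K1).
Proof. by rewrite -tofrac1 -tofracN -polyCN; apply: inD1_emb1; exact: inDN1. Qed.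
Lemma inD1_D (x y : K1) : inD1 x -> inD1 y -> inD1 (x + y).
Proof.
move=> [p [-> hp]] [q [-> hq]]; exists (p + q); rewrite tofracD; split=> //.
exact: (coefA_add (@inDD D) hp hq).
Qed.
Lemma inD1_M (x y : K1) : inD1 x -> inD1 y -> inD1 (x * y).
Proof.
move=> [p [-> hp]] [q [-> hq]]; exists (p * q); rewrite tofracM; split=> //.
exact: (coefA_mul (inD0 D) (@inDD D) (@inDM D) hp hq).
Qed.

Lemma polyY_eq (A : K1 -> Prop) (q : {poly K1}) : polyY A q%:F <-> forall i, A q`_i.
Proof. by split=> [[q' [/tofrac_inj -> h]]|h] //; exists q. Qed.

Section Prime1.
Variable Q : K1 -> Prop.
Hypothesis HQ : is_prime1 Q.
Lemma pr0 : Q 0. Proof. by case: HQ => _ []. Qed.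
Lemma prD x y : Q x -> Q y -> Q (x + y). Proof. by case: HQ => _ [_ [h _]]; apply: h. Qed.
Lemma prM a x : inD1 a -> Q x -> Q (a * x).
Proof. by case: HQ => _ [_ [_ [h _]]]; apply: h. Qed.
Lemma pr1 : ~ Q 1. Proof. by case: HQ => _ [_ [_ [_ [h _]]]]. Qed.
Lemma prP a b : inD1 a -> inD1 b -> Q (a * b) -> Q a \/ Q b.
Proof. by case: HQ => _ [_ [_ [_ [_ h]]]]; apply: h. Qed.
End Prime1.

Lemma contr_Dmod (Q : K1 -> Prop) : is_prime1 Q -> is_Dmod (contr Q).
Proof.
move=> HQ; split; first by split; [exact: inD0|rewrite emb10; exact: pr0].
split=> [u v [hu1 hu2] [hv1 hv2]|d u [hu1 hu2]].
  by split; [exact: inDD|rewrite emb1D; exact: prD].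
split; first by apply: inDM => //; exists d.
by rewrite emb1M; apply: prM => //; apply: inD1_emb1; exists d.
Qed.

Definition ext_ideal (P : K -> Prop) : K1 -> Prop :=
  fun f => exists p : {poly K}, f = p%:F /\ forall i, P p`_i.

Lemma contr_ext_ideal (P : K -> Prop) : is_ideal P -> seteq (contr (ext_ideal P)) P.
Proof.
move=> [PD hP] c; split=> [[_ [p [/tofrac_inj ep hp]]]|hc].
  by have := hp 0%N; rewrite -ep coefC.
split; first exact: PD.
by exists c%:P; split=> //; apply: coefA_C => //; apply: Dmod0.
Qed.

Lemma ext_ideal_prime (P : K -> Prop) : is_ideal P -> ~ P 1 ->
  (forall a b : D, P (a * b)%:F -> P a%:F \/ P b%:F) -> is_prime1 (ext_ideal P).
Proof.
move=> [PD hP] P1 Ppr.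
have PDD x y : P x -> P y -> P (x + y) by exact: DmodD.
have PA a x : inD a -> P x -> P (a * x) by move=> [d ->]; exact: DmodM.
have Pinpr a b : inD a -> inD b -> P (a * b) -> P a \/ P b.
  by move=> [d ->] [d' ->]; rewrite -tofracM; exact: Ppr.
split; first by move=> z [p [-> hp]]; exists p; split=> // i; exact: PD.
split; first by exists 0; rewrite tofrac0; split=> // i; rewrite coef0; apply: Dmod0.
split.
  move=> x y [p [-> hp]] [q [-> hq]]; exists (p + q); rewrite tofracD; split=> //.
  exact: (coefA_add PDD hp hq).
split.
  move=> a x [pa [-> hpa]] [p [-> hp]]; exists (pa * p); rewrite tofracM; split=> // i.
  rewrite coefM; apply: (big_ind P); [exact: Dmod0|move=> u v; exact: DmodD|].
  by move=> j _; apply: PA.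
split.
  move=> [p [e hp]]; have ep : p = 1 by apply: tofrac_inj; rewrite -e tofrac1.
  by apply: P1; have := hp 0%N; rewrite ep coefC.
move=> a b [pa [-> hpa]] [pb [-> hpb]] [p [e hp]].
have ep : pa * pb = p by apply: tofrac_inj; rewrite tofracM.
case: (gauss_prime (Dmod0 hP) PDD PA (inDN1 D) Pinpr hpa hpb) => [|h|h].
- by rewrite ep.
- by left; exists pa.
- by right; exists pb.
Qed.

Lemma poly_in_span (A : K -> Prop) (p : {poly K}) : (forall i, A p`_i) ->
  gen_mod (@inD1 D) (img (@emb1 D) A) p%:F.
Proof.
move=> hp; exists (size p), (fun i => emb1 p`_i), (fun i => ('X^i : {poly K})%:F).
split; first by move=> i; exists p`_i.
split; first by move=> i; exists 'X^i; split=> // j; rewrite coefXn; case: eqP => _;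
  [exact: inD1r|exact: inD0].
rewrite -{1}(coefK p) poly_def (big_morph _ (@tofracD _) (@tofrac0 _)).
by apply: eq_bigr => i _; rewrite /emb1 -tofracM mul_polyC.
Qed.

End PolyRings.

Section Saturation.
Variable D : idomainType.
Local Notation K := (KK D).
Local Notation K1 := (K1 D).
Variable star : (K -> Prop) -> (K -> Prop).
Hypothesis Hs : semistar star.

Lemma delta0 : Delta1 star (fun z : K1 => z = 0).
Proof.
split; last by left=> c [_ /eqP]; rewrite /emb1 tofrac_eq0 polyC_eq0 => /eqP.
split; first by move=> z ->; apply: inD1_0.
split=> //; split; first by move=> x y -> ->; rewrite addr0.
split; first by move=> a x _ ->; rewrite mulr0.
split; first by move/eqP; rewrite oner_eq0.
by move=> a b _ _ /eqP; rewrite mulf_eq0 => /orP [] /eqP; [left|right].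
Qed.

Lemma S1_nz z : S1 star z -> z != 0.
Proof.
move=> [_ h]; apply/eqP => e; apply: (h _ delta0); exists 0.
by split; [rewrite e tofrac0|move=> i; exact: coef0].
Qed.

Lemma S1_1 : S1 star 1.
Proof.
rewrite -tofrac1 -polyC1; split.
  by apply/polyY_eq; exact: (coefA_C (@inD1_0 D) (@inD1_1 D)).
by move=> Q [HQ _] /polyY_eq /(_ 0%N); rewrite coefC eqxx; exact: pr1.
Qed.

(* S_1^star is multiplicative, by Gauss's lemma for the primes of D1. *)
Lemma S1_M z1 z2 : S1 star z1 -> S1 star z2 -> S1 star (z1 * z2).
Proof.
move=> [[s1 [-> hs1]] n1] [[s2 [-> hs2]] n2]; rewrite -tofracM; split.
  by apply/polyY_eq; exact: (coefA_mul (@inD1_0 D) (@inD1_D D) (@inD1_M D) hs1 hs2).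
move=> Q hQ /polyY_eq hq; have HQ := hQ.1.
have QD x y : Q x -> Q y -> Q (x + y) by exact: prD.
case: (gauss_prime (pr0 HQ) QD (prM HQ) (@inD1_N1 D) (prP HQ) hs1 hs2 hq) => h.
  by apply: (n1 Q hQ); apply/polyY_eq.
by apply: (n2 Q hQ); apply/polyY_eq.
Qed.

Lemma locY_mul z (d : K1) : locY star z -> inD1 d -> locY star (z * emb2 d).
Proof.
move=> [a [s [[qa [-> hqa]] [hs ->]]]] hd; exists ((qa * d%:P)%:F), s; split.
  by apply/polyY_eq => i; rewrite coefMC; apply: inD1_M.
by split=> //; rewrite mulrAC /emb2 tofracM.
Qed.

Lemma qm_delta P : QMax star P -> Delta1 star (ext_ideal P).
Proof.
move=> HP; have hc := seteq_eq (contr_ext_ideal (qm_ideal HP)).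
split; first exact: ext_ideal_prime (qm_ideal HP) (qm_proper HP) (qm_prime Hs HP).
right; rewrite hc; split=> //; split; first exact: sf_sub_star_D (qm_inD HP).
move=> eq1; apply: (qm_proper HP); apply: (qm_quasi HP); last exact: inD1r.
by apply/eq1; apply: (star_ext Hs (Fbar_inD D)); exact: inD1r.
Qed.

Definition mult_ideal (pi : {poly K}) : K1 -> Prop :=
  fun z => inD1 z /\ exists r, z = (pi * r)%:F.

Lemma mult_ideal_delta (pi : {poly K}) : (1 < size pi)%N ->
  (forall a b, pi %| a * b -> pi %| a \/ pi %| b) -> Delta1 star (mult_ideal pi).
Proof.
move=> hpi ppi.
have pi0 : pi != 0 by rewrite -size_poly_eq0 -lt0n (ltn_trans _ hpi).
split; last first.
  (* a nonzero constant is not a multiple of pi *)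
  left=> c [_ [_ [r e]]]; apply/eqP; apply: contraT => c0.
  have ec : c%:P = pi * r by apply: tofrac_inj; rewrite -e.
  have : (size pi <= size c%:P)%N by apply: dvdp_leq; rewrite ?polyC_eq0 // ec dvdp_mulIl.
  by rewrite size_polyC c0 leqNgt hpi.
split; first by move=> z [].
split; first by split; [exact: inD1_0|exists 0; rewrite mulr0].
split.
  move=> x y [hx [r ex]] [hy [r' ey]]; split; first exact: (inD1_D hx hy).
  by exists (r + r'); rewrite ex ey mulrDr tofracD.
split.
  move=> a x ha [hx [r ex]]; split; first exact: inD1_M.
  by case: ha => pa [ea _]; exists (pa * r); rewrite ea ex -tofracM mulrCA.
split.
  move=> [_ [r e]]; have e1 : pi * r = 1 by apply: tofrac_inj; rewrite -e tofrac1.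
  have : pi %| 1 by rewrite -e1 dvdp_mulIl.
  by rewrite dvdp1 => /eqP h; rewrite h in hpi.
move=> a b ha hb [_ [r er]].
case: (ha) => pa [ea _]; case: (hb) => pb [eb _].
have : pi %| pa * pb.
  have -> : pa * pb = pi * r by apply: tofrac_inj; rewrite tofracM -ea -eb.
  exact: dvdp_mulIl.
case/ppi => /dvdpP [q eq].
  by left; split=> //; exists q; rewrite ea eq mulrC.
by right; split=> //; exists q; rewrite eb eq mulrC.
Qed.

(* A rational function f such that f s_i is a polynomial for every
   coefficient s_i of some s in S_1^star is itself a polynomial: a prime
   factor pi of its reduced denominator would divide every s_i, putting s in
   (pi K[X] cap D[X])[Y]. *)
Lemma poly_of_S1 (f : K1) (s : {poly K1}) : S1 star s%:F ->
  (forall i, exists r : {poly K}, f * s`_i = r%:F) -> exists p : {poly K}, f = p%:F.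
Proof.
move=> [/polyY_eq hs hQ] hr.
case: (frac_coprime f) => u [v [v0 cop ef]]; rewrite ef in hr *.
have vF : v%:F != 0 by rewrite tofrac_eq0.
case: (leqP (size v) 1) => hv.
  have ec := size1_polyC hv; set c := v`_0 in ec.
  have c0 : c != 0 by apply: contraNneq v0 => e; rewrite ec e.
  exists (u * (c^-1)%:P); rewrite tofracM; congr (_ * _).
  by apply: (mulfI vF); rewrite divff // -tofracM ec -polyCM divff // tofrac1.
case: (prime_factor hv) => pi [hpi dpi ppi].
case: (hQ _ (mult_ideal_delta hpi ppi)); apply/polyY_eq => i; split; first exact: hs.
case: (hs i) => h [ehi _]; case: (hr i) => r er; rewrite ehi in er.
have euh : u * h = r * v by apply: tofrac_inj; rewrite !tofracM -er [RHS]mulrAC divfK.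
have : pi %| u * h by rewrite euh; apply: dvdp_mull.
case/ppi => hd; last by case/dvdpP: hd => q eq; exists q; rewrite ehi eq mulrC.
have : pi %| gcdp u v by rewrite dvdp_gcd hd.
move/(dvdp_leq _); rewrite gcdp_eq0 negb_and v0 orbT => /(_ isT).
by move: cop; rewrite coprimep_def => /eqP ->; rewrite leqNgt hpi.
Qed.

(* A polynomial s in D[X][Y] whose content l satisfies 1 in star(l D) lies in
   S_1^star: a prime of Delta_1^star containing s would contain l, so it
   neither contracts to (0) nor has a contraction with a proper star_f-closure. *)
Lemma S1_of_content (l : seq K) : (forall i, (i < size l)%N -> inD l`_i) ->
  nz (fg_span l) -> star (fg_span l) 1 -> S1 star (\poly_(i < size l) emb1 l`_i)%:F.
Proof.
move=> hl nl h1; split.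
  apply/polyY_eq => i; rewrite coef_poly; case: ltnP => hi; last exact: inD1_0.
  exact: inD1_emb1 (hl i hi).
move=> Q [HQ hQ] /polyY_eq hq.
have sub : subs (fg_span l) (contr Q).
  apply: fg_sub; first exact: contr_Dmod HQ.
  by move=> i hi; split; [exact: hl|have := hq i; rewrite coef_poly hi].
case: hQ => [h0|[_ [hsub hneq]]].
  by case: (fg_nz nl) => i hi; rewrite (h0 _ (sub _ (fg_in hi))) eqxx.
apply: hneq => y; split; first exact: hsub.
by apply: (sf_one Hs); apply/star_fE; exists l.
Qed.

End Saturation.

Section Core.
Variable D : idomainType.
Local Notation K := (KK D).
Local Notation K1 := (K1 D).
Variable star : (K -> Prop) -> (K -> Prop).
Hypothesis Hs : semistar star.
Variable E : K -> Prop.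
Hypothesis HE : Fbar E.

Let hE : is_Dmod E. Proof. exact: HE.1. Qed.

Local Notation GM := (gen_mod (locY star) (img (fun e => emb2 (emb1 e)) E)).

Definition Epoly (w : K1) := exists r : {poly K}, w = r%:F /\ forall j, E r`_j.

Lemma Epoly0 : Epoly 0.
Proof. by exists 0; rewrite tofrac0; split=> // j; rewrite coef0; apply: Dmod0. Qed.
Lemma EpolyD x y : Epoly x -> Epoly y -> Epoly (x + y).
Proof.
move=> [r [-> hr]] [r' [-> hr']]; exists (r + r'); rewrite tofracD; split=> // j.
by rewrite coefD; apply: DmodD.
Qed.
Lemma EpolyM x a : Epoly x -> inD1 a -> Epoly (x * a).
Proof.
move=> [r [-> hr]] [pa [-> hpa]]; exists (r * pa); rewrite tofracM; split=> // j.
rewrite coefM; apply: (big_ind E); [exact: Dmod0|move=> u v; exact: DmodD|].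
by move=> i _; case: (hpa (j - i)%N) => d ->; rewrite mulrC; apply: DmodM.
Qed.
Lemma Epoly_coefM (q s : {poly K1}) : (forall i, Epoly q`_i) -> (forall i, inD1 s`_i) ->
  forall i, Epoly (q * s)`_i.
Proof.
move=> hq hs i; rewrite coefM; apply: (big_ind Epoly); [exact: Epoly0|exact: EpolyD|].
by move=> j _; apply: EpolyM.
Qed.

Lemma GM_denom z : GM z -> exists s : {poly K1}, S1 star s%:F /\
  exists q : {poly K1}, z * s%:F = q%:F /\ forall i, Epoly q`_i.
Proof.
pose T z := exists s : {poly K1}, S1 star s%:F /\
  exists q : {poly K1}, z * s%:F = q%:F /\ forall i, Epoly q`_i.
apply: (gm_ind (S := T)).
- exists 1; split; first by rewrite tofrac1; exact: S1_1.
  by exists 0; rewrite mul0r tofrac0; split=> // i; rewrite coef0; exact: Epoly0.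
- move=> x y [s1 [hs1 [q1 [e1 hq1]]]] [s2 [hs2 [q2 [e2 hq2]]]].
  have hs1D := (polyY_eq _ _).1 hs1.1; have hs2D := (polyY_eq _ _).1 hs2.1.
  exists (s1 * s2); split; first by rewrite tofracM; exact: S1_M.
  exists (q1 * s2 + q2 * s1); split.
    by rewrite tofracD !tofracM mulrDl mulrA e1 [s1%:F * s2%:F]mulrC mulrA e2.
  by move=> i; rewrite coefD; apply: EpolyD; apply: Epoly_coefM.
- move=> w a [e [he ->]] [a1 [s1 [[q1 [ea1 hq1]] [hs1 ->]]]].
  have [[s [es hsD]] _] := hs1; exists s; split; first by rewrite -es.
  exists ((emb1 e)%:P * q1); split.
    by rewrite -es -mulrA divfK ?(S1_nz hs1) // ea1 tofracM.
  move=> i; rewrite coefCM; apply: EpolyM => //.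
  by exists e%:P; split=> //; apply: coefA_C => //; exact: Dmod0.
Qed.

(* If p s_i lies in E[X] for all coefficients s_i of some s in S, then the
   coefficients of p lie in E^{~star}: for P quasi-star_f-maximal, s is not in
   P[X][Y] since P[X] lies in Delta, so some s_k has a coefficient outside P,
   and the content lemma applies to p s_k. *)
Lemma coef_in_tilde (p : {poly K}) (s : {poly K1}) : S1 star s%:F ->
  (forall i, Epoly (p%:F * s`_i)) -> forall i, star_tilde star E p`_i.
Proof.
move=> hs hps i P HP.
have [k hk] : exists k, ~ ext_ideal P s`_k.
  by apply/existsNP => hall; apply: (hs.2 _ (qm_delta Hs HP)); apply/polyY_eq.
have [h [eh hhD]] := (polyY_eq _ _).1 hs.1 k.
have hj : exists j, ~ P h`_j by apply/existsNP => hall; apply: hk; exists h.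
case: (hps k) => r [er hr]; rewrite eh -tofracM in er.
apply: (content (qm_Dmod HP) (qm_prime Hs HP) (qm_proper HP) hhD hj) => j.
by rewrite (tofrac_inj er).
Qed.

Lemma GM_tilde_poly f : GM (emb2 f) ->
  exists p : {poly K}, f = p%:F /\ forall i, star_tilde star E p`_i.
Proof.
move=> /GM_denom [s [hs [q [eq hq]]]].
have eq' : f%:P * s = q by apply: tofrac_inj; rewrite tofracM.
have hfs i : Epoly (f * s`_i) by rewrite -coefCM eq'.
have [p ef] : exists p : {poly K}, f = p%:F.
  by apply: (poly_of_S1 hs) => i; case: (hfs i) => r [er _]; exists r.
by exists p; split=> //; apply: (coef_in_tilde hs); rewrite -ef.
Qed.

Definition conductor (x : K) : K -> Prop := fun c => inD c /\ E (c * x).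

Lemma conductor_ideal x : is_ideal (conductor x).
Proof.
split; first by move=> c [].
split; first by split; [exact: inD0|rewrite mul0r; exact: Dmod0].
split=> [u v [hu1 hu2] [hv1 hv2]|d u [hu1 hu2]].
  by split; [exact: inDD|rewrite mulrDl; exact: DmodD].
split; first by apply: inDM => //; exists d.
by rewrite -mulrA; apply: DmodM.
Qed.

Lemma conductor_nz x : nz (conductor x).
Proof.
have [_ [e [he ne]]] := HE.
case: (fracE x) => a [b [b0 ex]]; case: (fracE e) => a' [b' [b'0 ee]].
have a'0 : a' != 0 by apply: contraNneq ne => h; rewrite ee h tofrac0 mul0r.
exists (b * a')%:F; split; last by rewrite tofrac_eq0 mulf_neq0.
split; first by exists (b * a').
have -> : (b * a')%:F * x = (a * b')%:F * e.
  have bF : b%:F != 0 by rewrite tofrac_eq0.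
  have b'F : b'%:F != 0 by rewrite tofrac_eq0.
  by rewrite ex ee !tofracM [LHS]mulrC [LHS]mulrA divfK // [RHS]mulrCA mulfK // mulrC.
exact: DmodM.
Qed.

(* For x in E^{~star}, the conductor is in no quasi-star_f-maximal ideal, so
   1 lies in its star_f-closure. *)
Lemma tilde_conductor x : star_tilde star E x -> star_f star (conductor x) 1.
Proof.
move=> hx; apply: contrapT => h1.
case: (qm_exists Hs (conductor_ideal x) (conductor_nz x) h1) => P HP sIP.
case: (loc_denom (qm_Dmod HP) (qm_prime Hs HP) (qm_proper HP) hE (hx P HP)) => s hs hsx.
by apply: hs; apply: sIP; split=> //; exists s.
Qed.

(* Conversely x in E^{~star} lies in E D1[Y]_S: with l generating a finitely
   generated part of the conductor such that 1 in star(l D), the polynomial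
   s = sum_i l_i Y^i lies in S and x = sum_i (l_i x) Y^i / s. *)
Lemma tilde_GM x : star_tilde star E x -> GM (emb2 (emb1 x)).
Proof.
move=> hx; case/star_fE: (tilde_conductor hx) => l [nl [sl h1]].
have hl i : (i < size l)%N -> conductor x l`_i by move=> hi; apply: sl; apply: fg_in.
pose s := \poly_(i < size l) emb1 l`_i : {poly K1}.
have hS : S1 star s%:F := S1_of_content Hs (fun i hi => (hl i hi).1) nl h1.
have es : s%:F = \sum_(i < size l) emb2 (emb1 l`_i) * ('X^i)%:F.
  rewrite /s poly_def (big_morph _ (@tofracD _) (@tofrac0 _)); apply: eq_bigr => i _.
  by rewrite /emb2 -tofracM mul_polyC.
clearbody s.
exists (size l), (fun i => emb2 (emb1 (l`_i * x))), (fun i => ('X^i : {poly K1})%:F / s%:F).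
split; first by move=> i; exists (l`_i * x); split=> //; exact: (hl i (ltn_ord i)).2.
split.
  move=> i; exists ('X^i)%:F, s%:F; split=> //.
  by apply/polyY_eq => j; rewrite coefXn; case: eqP => _; [exact: inD1_1|exact: inD1_0].
have hsum : \sum_(i < size l) emb2 (emb1 (l`_i * x)) * ('X^i : {poly K1})%:F =
    emb2 (emb1 x) * \sum_(i < size l) emb2 (emb1 l`_i) * ('X^i)%:F.
  rewrite [RHS]mulr_sumr; apply: eq_bigr => i _.
  rewrite emb1M emb2M.
  move: (emb2 (emb1 l`_i)) (emb2 (emb1 x)) (('X^i : {poly K1})%:F) => u v w.
  by rewrite mulrA [v * u]mulrC.
rewrite (eq_bigr (fun i : 'I_(size l) =>
  emb2 (emb1 (l`_i * x)) * ('X^i : {poly K1})%:F / s%:F)); last by move=> i _; rewrite mulrA.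
by rewrite -mulr_suml hsum -es mulfK //; exact: S1_nz hS.
Qed.

Lemma tilde_span_GM f : gen_mod (@inD1 D) (img (@emb1 D) (star_tilde star E)) f ->
  GM (emb2 f).
Proof.
apply: (gm_ind (S := fun g => GM (emb2 g))); [by rewrite emb20; exact: gm0| |].
  by move=> u v hu hv; rewrite emb2D; apply: gmD.
move=> w d [y [hy ->]] hd; rewrite emb2M.
by apply: gm_mulr (tilde_GM hy) => a ha; apply: locY_mul.
Qed.

Lemma bracketE f : bracket star (gen_mod (@inD1 D) (img (@emb1 D) E)) f <-> GM (emb2 f).
Proof.
split; last first.
  apply: gm_mono => // w [e [he ->]]; exists (emb1 e); split=> //.
  by rewrite -[emb1 e]mulr1; apply: gm_base; [exists e|exact: inD1_1].
apply: gm_ind; [exact: gm0|move=> u v; exact: gmD|].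
move=> w a [g [hg ->]] ha; move: g hg a ha.
apply: (gm_ind (S := fun g => forall a, locY star a -> GM (emb2 g * a))).
- by move=> a _; rewrite emb20 mul0r; exact: gm0.
- by move=> u v hu hv a ha; rewrite emb2D mulrDl; apply: gmD; [apply: hu|apply: hv].
- move=> w' d [e [he ->]] hd a ha; rewrite emb2M.
  move: (emb2 d) (locY_mul ha hd) => v hv.
  by rewrite -mulrA [v * a]mulrC; apply: gm_base => //; exists e.
Qed.

End Core.

Theorem theorem2p3 (D : idomainType) (star : (KK D -> Prop) -> (KK D -> Prop))
  (Hstar : semistar star) (E : KK D -> Prop) (HE : Fbar E) :
  (* (c) *)
  (forall x : KK D,
     (bracket star (gen_mod (@inD1 D) (img (@emb1 D) E)) (emb1 x) <->
      gen_mod (locY star) (img (fun e => emb2 (emb1 e)) E) (emb2 (emb1 x))) /\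
     (gen_mod (locY star) (img (fun e => emb2 (emb1 e)) E) (emb2 (emb1 x)) <->
      star_tilde star E x)) /\
  (* (d) *)
  (forall f : K1 D,
     bracket star (gen_mod (@inD1 D) (img (@emb1 D) E)) f <->
     gen_mod (@inD1 D) (img (@emb1 D) (star_tilde star E)) f).
Proof.
split=> [x|f].
  split; first exact: bracketE.
  split; last exact: tilde_GM.
  (* x is the constant coefficient of the polynomial given by GM_tilde_poly *)
  move=> /(GM_tilde_poly Hstar HE) [p [ep hp]].
  by have := hp 0%N; rewrite -(tofrac_inj ep) coefC.
split; first by move=> /bracketE /(GM_tilde_poly Hstar HE) [p [-> hp]]; apply: poly_in_span.
by move=> /(tilde_span_GM Hstar HE) /bracketE.
Qed.
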